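(* Define on $\mathbb{D}$ the harmonic mapping $f_D=h_D+\overline{g_D}$, where $$h_D(z)=\tfrac14\log\frac{1+z}{1-z}-\tfrac{i}{4}\log\frac{1+iz}{1-iz},\qquad g_D(z)=-\tfrac14\log\frac{1+z}{1-z}-\tfrac{i}{4}\log\frac{1+iz}{1-iz}.$$ Define also $f_C=h_C+\overline{g_C}$, where $$h_C(z)=\tfrac14\log\frac{1+z}{1-z}+\tfrac12\,\frac{z}{1-z^2},\qquad g_C(z)=\tfrac14\log\frac{1+z}{1-z}-\tfrac12\,\frac{z}{1-z^2}.$$ Both $f_D$ and $f_C$ have dilatation $\omega(z)=-z^2$. For every $t\in[0,1]$, the harmonic mapping $f_t=(1-t)f_D+tf_C$ is univalent on $\mathbb{D}$.
   Context: $\mathbb{D}=\{z\in\mathbb{C}:|z|<1\}$, and $\log$ denotes the principal branch. For $z\in\mathbb{D}$ the quantities $(1+z)/(1-z)$ and $(1+iz)/(1-iz)$ lie in the right half-plane. The dilatation of a harmonic mapping $h+\overline{g}$ is $g'/h'$. *)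

From HB Require Import structures.
From mathcomp Require Import all_boot all_order all_algebra.
From mathcomp Require Import all_classical all_reals.
From mathcomp Require Import exp trigo.
From mathcomp Require Export complex.
Set Implicit Arguments. Unset Strict Implicit. Unset Printing Implicit Defensive.
Import Order.TTheory GRing.Theory Num.Theory.
Local Open Scope ring_scope.
Local Open Scope complex_scope.

Section Defs.
Variable R : realType.

(* Principal argument Arg w in (-pi, pi], with Arg 0 = 0. *)
Definition Arg (w : R[i]) : R :=
  let a := complex.Re w in let b := complex.Im w in
  if 0 < a then atan (b / a)
  else if a < 0 then (if 0 <= b then atan (b / a) + pi else atan (b / a) - pi)
  else if 0 < b then pi / 2
  else if b < 0 then - (pi / 2) else 0.

Definition Clog (w : R[i]) : R[i] :=
  (ln (Num.sqrt (complex.Re w ^+ 2 + complex.Im w ^+ 2)))%:C + 'i * (Arg w)%:C.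

Definition unit_disk : set R[i] := [set z | `|z| < 1].

Definition L1 (z : R[i]) : R[i] := Clog ((1 + z) / (1 - z)).
Definition L2 (z : R[i]) : R[i] := Clog ((1 + 'i * z) / (1 - 'i * z)).

Definition hD (z : R[i]) : R[i] := 4^-1 * L1 z - 'i / 4%:R * L2 z.
Definition gD (z : R[i]) : R[i] := - (4^-1 * L1 z) - 'i / 4%:R * L2 z.
Definition hC (z : R[i]) : R[i] := 4^-1 * L1 z + 2^-1 * (z / (1 - z ^+ 2)).
Definition gC (z : R[i]) : R[i] := 4^-1 * L1 z - 2^-1 * (z / (1 - z ^+ 2)).

Definition fD (z : R[i]) : R[i] := hD z + (gD z)^*.
Definition fC (z : R[i]) : R[i] := hC z + (gC z)^*.

Definition f_t (t : R) (z : R[i]) : R[i] := (1 - t)%:C * fD z + t%:C * fC z.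

Definition univalent_on_disk (f : R[i] -> R[i]) : Prop :=
  forall z1 z2, unit_disk z1 -> unit_disk z2 -> f z1 = f z2 -> z1 = z2.

End Defs.

(* With w = (1 + z) / (1 - z) = r e^(i y), which maps the disk onto the right
   half-plane (r > 0, |y| < pi/2), twice the real and imaginary parts of f_t are
     ft_re = (1 - t) atan (sinh (ln r) / cos y) + t ln r,
     ft_im = (1 - t) y + t cosh (ln r) sin y.
   ft_re is increasing in r, odd under r -> 1/r and even in y; ft_im is
   increasing in y, even under r -> 1/r and odd in y.  These symmetries reduce
   injectivity to two points with 1 <= r1 < r2 and 0 <= y1, y2 < pi/2 on one
   level curve of ft_re.  There y2 < y1, and ft_im strictly decreases along the
   curve by the elementary bounds atan v - atan u <= 1/u - 1/v,
   cos x - cos y <= y - x and the convexity of cosh. *)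

From mathcomp Require Import all_boot all_order all_algebra.
From mathcomp Require Import all_classical all_reals.
From mathcomp Require Import topology normedtype derive realfun exp trigo.
From mathcomp Require Import ring lra.
Import Order.TTheory GRing.Theory Num.Theory.
Import numFieldNormedType.Exports.
Local Open Scope classical_set_scope.
Local Open Scope ring_scope.

Section RealInequalities.
Context {R : realType}.
Implicit Types u v x y r : R.

Lemma atan_sub_le_invr_sub {u v} : 0 < u -> u <= v -> atan v - atan u <= u^-1 - v^-1.
Proof.
move=> u0 uv.
pose phi x : R := atan x + x^-1.
pose dphi x := (1 + x ^+ 2)^-1 + - x ^- 2 *: 1 : R.
have phi'x x : 0 < x -> is_derive x 1 phi (dphi x).
  by move=> x0; apply: is_deriveD; exact: is_deriveV (lt0r_neq0 x0) _.
have uI x : x \in `[u, v] -> 0 < x by rewrite in_itv /= => /andP[/(lt_le_trans u0)].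
have phi_cont : {within `[u, v], continuous phi}.
  by apply: derivable_within_continuous => x /uI x0; apply: ex_derive; exact: phi'x.
have [c /uI c0 phiE] :=
  MVT_segment uv (fun x xI => phi'x x (uI x (subset_itv_oo_cc xI))) phi_cont.
have dphi_le0 : dphi c <= 0.
  have c2 : 0 < c ^+ 2 by exact: exprn_gt0.
  rewrite /dphi /GRing.scale /= mulr1 subr_le0 lef_pV2 ?posrE ?lerDr //.
  by rewrite addrC ltr_wpDr.
have : phi v - phi u <= 0 by rewrite phiE mulr_le0_ge0 // subr_ge0.
rewrite /phi; lra.
Qed.

Lemma cos_sub_le {x y} : x <= y -> cos x - cos y <= y - x.
Proof.
move=> xy.
pose psi z : R := z + cos z.
have psi'z (z : R) : is_derive z 1 psi (1 + - sin z) by apply: is_deriveD.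
have psi_cont : {within `[x, y], continuous psi}.
  by apply: derivable_within_continuous => z _; apply: ex_derive; exact: psi'z.
have [c _ psiE] := MVT_segment xy (fun z _ => psi'z z) psi_cont.
have : 0 <= psi y - psi x by rewrite psiE mulr_ge0 // subr_ge0 ?sin_le1.
rewrite /psi; lra.
Qed.

Definition sinh_ln r := (r - r^-1) / 2.
Definition cosh_ln r := (r + r^-1) / 2.

Lemma sinh_lnV r : sinh_ln r^-1 = - sinh_ln r.
Proof. by rewrite /sinh_ln invrK -mulNr opprB. Qed.

Lemma cosh_lnV r : cosh_ln r^-1 = cosh_ln r.
Proof. by rewrite /cosh_ln invrK addrC. Qed.

Lemma sinh_ln1 : sinh_ln 1 = 0.
Proof. by rewrite /sinh_ln invr1 subrr mul0r. Qed.

Lemma sinh_ln_lt {u v} : 0 < u -> u < v -> sinh_ln u < sinh_ln v.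
Proof.
move=> u0 uv; have : v^-1 < u^-1 by rewrite ltf_pV2 ?posrE // (lt_trans u0).
rewrite /sinh_ln; lra.
Qed.

Lemma sinh_ln_gt0 {r} : 1 < r -> 0 < sinh_ln r.
Proof. by move=> r1; rewrite -sinh_ln1 sinh_ln_lt. Qed.

Lemma cosh_ln_gt0 {r} : 0 < r -> 0 < cosh_ln r.
Proof. by move=> r0; rewrite /cosh_ln divr_gt0 // addr_gt0 ?invr_gt0. Qed.

Lemma cosh_ln_lt {u v} : 1 <= u -> u < v -> cosh_ln u < cosh_ln v.
Proof.
move=> u1 uv; have u0 : 0 < u by lra.
rewrite /cosh_ln ltr_pM2r ?invr_gt0 // -subr_gt0.
have -> : v + v^-1 - (u + u^-1) = (v - u) * (u * v - 1) / (u * v).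
  by field; apply/andP; split; apply: lt0r_neq0; lra.
by apply: divr_gt0; [apply: mulr_gt0|]; nra.
Qed.

(* the tangent-line inequality for the convex function cosh, at s = ln v *)
Lemma cosh_ln_sub_le {u v} : 0 < u -> 1 <= v ->
  cosh_ln v - cosh_ln u <= sinh_ln v * (ln v - ln u).
Proof.
move=> u0 v1; have v0 : 0 < v by lra.
have ln_ge : 1 - u / v <= ln v - ln u.
  have := @le_ln1Dx R (u / v - 1); rewrite [1 + _]addrC subrK ln_div ?posrE //.
  by have := divr_gt0 u0 v0; lra.
have sv0 : 0 <= sinh_ln v.
  have [<-|v_ne1] := eqVneq 1 v; first by rewrite sinh_ln1.
  by apply/ltW/sinh_ln_gt0; rewrite lt_neqAle v_ne1.
apply: le_trans (ler_wpM2l sv0 ln_ge); rewrite -subr_ge0.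
have -> : sinh_ln v * (1 - u / v) - (cosh_ln v - cosh_ln u) =
    (v - u) ^+ 2 / (2 * u * v ^+ 2).
  by rewrite /sinh_ln /cosh_ln; field; rewrite !lt0r_neq0.
by rewrite divr_ge0 ?sqr_ge0 // mulr_ge0 ?sqr_ge0 //; lra.
Qed.

End RealInequalities.

Section PolarForm.
Context {R : realType} (t : R).
Hypothesis t01 : 0 <= t <= 1.

Definition ft_re (r y : R) := (1 - t) * atan (sinh_ln r / cos y) + t * ln r.
Definition ft_im (r y : R) := (1 - t) * y + t * cosh_ln r * sin y.

Lemma ft_reV r y : 0 < r -> ft_re r^-1 y = - ft_re r y.
Proof. by move=> r0; rewrite /ft_re sinh_lnV mulNr atanN lnV ?posrE //; lra. Qed.

Lemma ft_imV r y : ft_im r^-1 y = ft_im r y.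
Proof. by rewrite /ft_im cosh_lnV. Qed.

Lemma ft_reN r y : ft_re r (- y) = ft_re r y.
Proof. by rewrite /ft_re cosN. Qed.

Lemma ft_imN r y : ft_im r (- y) = - ft_im r y.
Proof. by rewrite /ft_im sinN; lra. Qed.

Lemma ft_re1 y : ft_re 1 y = 0.
Proof. by rewrite /ft_re sinh_ln1 mul0r atan0 ln1 !mulr0 addr0. Qed.

Lemma ft_im0 r : ft_im r 0 = 0.
Proof. by rewrite /ft_im sin0 !mulr0 addr0. Qed.

Lemma ft_re_homo y : -(pi / 2) < y < pi / 2 ->
  {in Num.pos &, {homo ft_re^~ y : r1 r2 / r1 < r2}}.
Proof.
move=> hy r1 r2; rewrite !posrE => r1_gt0 r2_gt0 r12.
have cy := cos_gt0_pihalf hy.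
have atan_le : atan (sinh_ln r1 / cos y) <= atan (sinh_ln r2 / cos y).
  by apply/le_atan/ltW; rewrite ltr_pM2r ?invr_gt0 // sinh_ln_lt.
have ln_lt : ln r1 < ln r2 by rewrite ltr_ln ?posrE.
have [t0|t_neq0] := eqVneq t 0.
  rewrite /ft_re t0 !subr0 !mul1r !mul0r !addr0 lt_atan //.
  by rewrite ltr_pM2r ?invr_gt0 // sinh_ln_lt.
have : 0 < t by rewrite lt_neqAle eq_sym t_neq0; case/andP: t01.
rewrite /ft_re; move: t01 => /andP[_ t1]; nra.
Qed.

Lemma ft_im_homo r : 0 < r ->
  {in `](- (pi / 2)), pi / 2[ &, {homo ft_im r : y1 y2 / y1 < y2}}.
Proof.
move=> r0 y1 y2 y1I y2I y12.
have sin_lt : sin y1 < sin y2 by rewrite ltr_sin // subset_itv_oo_cc.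
have c_gt0 := cosh_ln_gt0 r0.
rewrite /ft_im; have [->|t_ne1] := eqVneq t 1.
  by rewrite subrr !mul0r !add0r !mul1r ltr_pM2l.
move: t01 => /andP[t0 t1]; have t_lt1 : t < 1 by rewrite lt_neqAle t_ne1.
have := mulr_ge0 t0 (ltW c_gt0); nra.
Qed.

Lemma ft_re_ge0 r y : 0 < r -> -(pi / 2) < y < pi / 2 -> (0 <= ft_re r y) = (1 <= r).
Proof. by move=> r0 hy; rewrite -(ft_re1 y) (le_mono_in (ft_re_homo y hy)) ?posrE. Qed.

Lemma ft_im_ge0 r y : 0 < r -> -(pi / 2) < y < pi / 2 -> (0 <= ft_im r y) = (0 <= y).
Proof.
move=> r0 /andP[y_gt y_lt]; have pi2 : 0 < pi / 2 :> R by rewrite divr_gt0 ?pi_gt0.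
by rewrite -{1}(ft_im0 r) (le_mono_in (ft_im_homo r r0)) // in_itv /=; apply/andP; split; lra.
Qed.

Lemma ft_re_level_atan {r1 r2 y1 y2} : 0 < r1 -> r1 < r2 -> 1 < r2 ->
  0 < cos y1 -> 0 < cos y2 -> ft_re r1 y1 = ft_re r2 y2 ->
  0 < sinh_ln r2 / cos y2 <= sinh_ln r1 / cos y1 /\
  (1 - t) * (atan (sinh_ln r1 / cos y1) - atan (sinh_ln r2 / cos y2)) = t * (ln r2 - ln r1).
Proof.
move=> r1_gt0 r12 r2_gt1 cos1 cos2 ft_re12; move: t01 => /andP[t0 t1].
set u1 := sinh_ln r1 / cos y1; set u2 := sinh_ln r2 / cos y2.
have atanE : (1 - t) * (atan u1 - atan u2) = t * (ln r2 - ln r1).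
  by move: ft_re12; rewrite /ft_re -/u1 -/u2; lra.
split=> //.
have ln12 : ln r1 < ln r2 by rewrite ltr_ln ?posrE // (lt_trans r1_gt0).
have t_lt1 : t < 1.
  rewrite lt_neqAle t1 andbT; apply/eqP => t_eq1.
  by move: atanE; rewrite t_eq1 subrr mul0r mul1r; lra.
have atan21 : atan u2 <= atan u1.
  have : 0 <= (1 - t) * (atan u1 - atan u2) by rewrite atanE mulr_ge0 // subr_ge0 ltW.
  by rewrite pmulr_rge0 ?subr_gt0 // subr_ge0.
have u2_gt0 : 0 < u2 by rewrite divr_gt0 // sinh_ln_gt0.
by rewrite u2_gt0 leNgt; apply/negP => /lt_atan; lra.
Qed.

Lemma ft_re_level_bound {r1 r2 y1 y2} : 1 <= r1 -> r1 < r2 ->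
  0 <= y1 < pi / 2 -> 0 <= y2 < pi / 2 -> ft_re r1 y1 = ft_re r2 y2 ->
  y2 < y1 /\ t * (cosh_ln r2 - cosh_ln r1) <= (1 - t) * (y1 - y2).
Proof.
move=> r1_ge1 r12 /andP[y1_ge0 y1_lt] /andP[y2_ge0 y2_lt] ft_re12.
have pi_gt0 := pi_gt0 R.
have r1_gt0 : 0 < r1 by lra.
have cos1 : 0 < cos y1 by apply: cos_gt0_pihalf; apply/andP; split; lra.
have cos2 : 0 < cos y2 by apply: cos_gt0_pihalf; apply/andP; split; lra.
have [] := ft_re_level_atan r1_gt0 r12 (le_lt_trans r1_ge1 r12) cos1 cos2 ft_re12.
set u1 := sinh_ln r1 / cos y1; set u2 := sinh_ln r2 / cos y2 => /andP[u2_gt0 u21] atanE.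
have u1_gt0 : 0 < u1 by exact: lt_le_trans u21.
have s12 := sinh_ln_lt r1_gt0 r12.
have s1_gt0 : 0 < sinh_ln r1 by rewrite -(divfK (lt0r_neq0 cos1) (sinh_ln r1)) mulr_gt0.
have s2_gt0 : 0 < sinh_ln r2 by rewrite (lt_trans s1_gt0).
have cosE :
    cos y2 - cos y1 = sinh_ln r2 * (u2^-1 - u1^-1) + (sinh_ln r2 - sinh_ln r1) / u1.
  rewrite /u1 /u2; move: (sinh_ln r1) (sinh_ln r2) s1_gt0 s2_gt0 => s1 s2 s1_gt0 s2_gt0.
  by field; rewrite !lt0r_neq0.
have invu12 : u1^-1 <= u2^-1 by rewrite lef_pV2 ?posrE.
have sinh_pos : 0 <= sinh_ln r2 * (u2^-1 - u1^-1) by rewrite mulr_ge0 ?subr_ge0 // ltW.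
have sinh_diff : 0 < (sinh_ln r2 - sinh_ln r1) / u1 by rewrite divr_gt0 ?subr_gt0.
have y21 : y2 < y1.
  by rewrite -ltr_cos ?in_itv /= ?y1_ge0 ?y2_ge0 /=; lra.
split=> //.
have atan_cos : sinh_ln r2 * (atan u1 - atan u2) <= cos y2 - cos y1.
  have : sinh_ln r2 * (atan u1 - atan u2) <= sinh_ln r2 * (u2^-1 - u1^-1).
    by apply: ler_wpM2l; [exact: ltW | exact: atan_sub_le_invr_sub].
  rewrite cosE; lra.
have cosh_sinh := cosh_ln_sub_le r1_gt0 (ltW (le_lt_trans r1_ge1 r12)).
have cos_le := cos_sub_le (ltW y21).
have cosh_atan :
    t * (cosh_ln r2 - cosh_ln r1) <= sinh_ln r2 * ((1 - t) * (atan u1 - atan u2)).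
  by rewrite atanE mulrCA; apply: ler_wpM2l; case/andP: t01.
apply: le_trans cosh_atan _.
by rewrite mulrCA; apply: ler_wpM2l; move: t01 => /andP[_ t1]; lra.
Qed.

Lemma ft_im_lt_on_re_level {r1 r2 y1 y2} : 1 <= r1 -> r1 < r2 ->
  0 <= y1 < pi / 2 -> 0 <= y2 < pi / 2 -> ft_re r1 y1 = ft_re r2 y2 ->
  ft_im r2 y2 < ft_im r1 y1.
Proof.
move=> r1_ge1 r12 hy1 hy2 ft_re12.
have [y21 bound] := ft_re_level_bound r1_ge1 r12 hy1 hy2 ft_re12.
move: hy1 hy2 t01 => /andP[y1_ge0 y1_lt] /andP[y2_ge0 y2_lt] /andP[t0 t1].
have pi_gt0 := pi_gt0 R.
have c12 := cosh_ln_lt r1_ge1 r12.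
have c1_gt0 : 0 < cosh_ln r1 by rewrite cosh_ln_gt0 //; lra.
have sin21 : sin y2 < sin y1 by rewrite ltr_sin // in_itv /=; apply/andP; split; lra.
have sin2_le1 := sin_le1 y2.
rewrite /ft_im; have [->|t_ne0] := eqVneq t 0; first by lra.
have t_gt0 : 0 < t by rewrite lt_neqAle eq_sym t_ne0.
(* [ft_im r1 y1 - ft_im r2 y2] is this term plus the slack in [bound] *)
have : 0 < t * ((cosh_ln r2 - cosh_ln r1) * (1 - sin y2) + cosh_ln r1 * (sin y1 - sin y2)).
  apply: mulr_gt0 => //; apply: ltr_wpDl; last by rewrite mulr_gt0 // subr_gt0.
  by rewrite mulr_ge0 // subr_ge0 // ltW.
nra.
Qed.

Lemma ft_re_im_neq_ge1 {r1 r2 y1 y2} : 1 <= r1 -> r1 < r2 ->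
  -(pi / 2) < y1 < pi / 2 -> -(pi / 2) < y2 < pi / 2 ->
  ft_re r1 y1 = ft_re r2 y2 -> ft_im r1 y1 <> ft_im r2 y2.
Proof.
move=> r1_ge1 r12 hy1 hy2 ft_re12 ft_im12.
have r1_gt0 : 0 < r1 by lra.
have r2_gt0 : 0 < r2 by lra.
have y_sign : (0 <= y1) = (0 <= y2) by rewrite -(ft_im_ge0 r1) // ft_im12 ft_im_ge0.
move: hy1 hy2 => /andP[y1_gt y1_lt] /andP[y2_gt y2_lt].
have [y1_ge0|y1_lt0] := leP 0 y1.
  have y2_ge0 : 0 <= y2 by rewrite -y_sign.
  have := @ft_im_lt_on_re_level r1 r2 y1 y2 r1_ge1 r12.
  by rewrite y1_ge0 y2_ge0 y1_lt y2_lt ft_im12 ltxx => /(_ isT isT ft_re12).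
have y2_lt0 : y2 < 0 by rewrite ltNge -y_sign -ltNge.
have hy1 : 0 <= - y1 < pi / 2 by apply/andP; split; lra.
have hy2 : 0 <= - y2 < pi / 2 by apply/andP; split; lra.
have := ft_im_lt_on_re_level r1_ge1 r12 hy1 hy2.
by rewrite !ft_reN !ft_imN ft_im12 ltxx => /(_ ft_re12).
Qed.

Lemma ft_re_im_neq {r1 r2 y1 y2} : 0 < r1 -> r1 < r2 ->
  -(pi / 2) < y1 < pi / 2 -> -(pi / 2) < y2 < pi / 2 ->
  ft_re r1 y1 = ft_re r2 y2 -> ft_im r1 y1 <> ft_im r2 y2.
Proof.
move=> r1_gt0 r12 hy1 hy2 ft_re12.
have r2_gt0 : 0 < r2 by lra.
have r_sign : (1 <= r1) = (1 <= r2) by rewrite -(ft_re_ge0 r1 y1) // ft_re12 ft_re_ge0.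
have [r1_ge1|r1_lt1] := leP 1 r1; first exact: ft_re_im_neq_ge1.
have r2_le1 : r2 <= 1 by rewrite ltW // ltNge -r_sign -ltNge.
rewrite -(ft_imV r1) -(ft_imV r2) => /esym; apply: ft_re_im_neq_ge1 hy2 hy1 _.
- by rewrite invf_ge1.
- by rewrite ltf_pV2 ?posrE.
- by rewrite !ft_reV // ft_re12.
Qed.

Lemma ft_re_im_inj {r1 r2 y1 y2} : 0 < r1 -> 0 < r2 ->
  -(pi / 2) < y1 < pi / 2 -> -(pi / 2) < y2 < pi / 2 ->
  ft_re r1 y1 = ft_re r2 y2 -> ft_im r1 y1 = ft_im r2 y2 -> r1 = r2 /\ y1 = y2.
Proof.
move=> r1_gt0 r2_gt0 hy1 hy2 ft_re12 ft_im12.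
have [r12|r21|r12] := ltgtP r1 r2.
- by have := ft_re_im_neq r1_gt0 r12 hy1 hy2 ft_re12.
- by have := ft_re_im_neq r2_gt0 r21 hy2 hy1 (esym ft_re12) (esym ft_im12).
split=> //; rewrite -r12 in ft_im12.
by apply: (inc_inj_in (le_mono_in (ft_im_homo r1 r1_gt0))) ft_im12; rewrite in_itv.
Qed.

End PolarForm.

Local Open Scope complex_scope.

Section ComplexComputations.
Context {R : realType}.
Implicit Types (a b : R) (w z : R[i]).

Lemma complex_inv a b :
  (a +i* b)^-1 = (a / (a ^+ 2 + b ^+ 2)) +i* (- (b / (a ^+ 2 + b ^+ 2))).
Proof. by []. Qed.

Lemma complex_nat n : (n%:R : R[i]) = n%:R +i* 0.
Proof. by rewrite -(rmorph_nat (real_complex R)). Qed.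

Lemma complex_neq0 w : complex.Re w != 0 -> w != 0.
Proof. by apply: contraNN => /eqP ->. Qed.

Lemma ReIm_ft t z :
  2 * complex.Re (f_t t z) = (1 - t) * complex.Im (L2 z) + t * complex.Re (L1 z) /\
  2 * complex.Im (f_t t z) =
    (1 - t) * complex.Im (L1 z) + 2 * t * complex.Im (z / (1 - z ^+ 2)).
Proof.
rewrite /f_t /fD /fC /hD /gD /hC /gC.
move: (L1 z) (L2 z) (z / (1 - z ^+ 2)) => [a1 b1] [a2 b2] [a3 b3].
by rewrite !complex_nat !complex_inv -!complexr0; simpc; split; rewrite /=; field.
Qed.

Lemma Re_Clog w :
  complex.Re (Clog w) = ln (Num.sqrt (complex.Re w ^+ 2 + complex.Im w ^+ 2)).
Proof. by rewrite /Clog -!complexr0; simpc. Qed.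

Lemma Im_Clog w : complex.Im (Clog w) = Arg w.
Proof. by rewrite /Clog -!complexr0; simpc. Qed.

Lemma Arg_Re_gt0 w : 0 < complex.Re w -> Arg w = atan (complex.Im w / complex.Re w).
Proof. by rewrite /Arg => ->. Qed.

Lemma disk_Re_Im {z} : `|z| < 1 -> complex.Re z ^+ 2 + complex.Im z ^+ 2 < 1.
Proof.
case: z => x y; rewrite normc_def /= ltcR => xy_lt1.
have xy_ge0 : 0 <= x ^+ 2 + y ^+ 2 by rewrite addr_ge0 ?sqr_ge0.
by rewrite -(sqr_sqrtr xy_ge0) -(expr1n _ 2) ltrXn2r ?sqrtr_ge0.
Qed.

End ComplexComputations.

Section CayleyTransform.
Context {R : realType} {z : R[i]}.
Hypothesis z_disk : `|z| < 1.
Let w := (1 + z) / (1 - z).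

Let disk_bounds : -1 < complex.Re z < 1 /\ -1 < complex.Im z < 1.
Proof. by have := disk_Re_Im z_disk; split; apply/andP; split; nra. Qed.

Let subz_neq0 : 1 - z != 0.
Proof.
have [/andP[_ x_lt1] _] := disk_bounds.
by apply: complex_neq0; rewrite raddfB /= lt0r_neq0 // subr_gt0.
Qed.

Let addz_neq0 : 1 + z != 0.
Proof.
have [/andP[x_gtN1 _] _] := disk_bounds.
by apply: complex_neq0; rewrite raddfD /= lt0r_neq0 //; lra.
Qed.

Let subiz_neq0 : 1 - 'i * z != 0.
Proof.
have [_ /andP[y_gtN1 _]] := disk_bounds.
by apply: complex_neq0; rewrite raddfB /= mulrC ReiNIm lt0r_neq0 //; lra.
Qed.

Lemma cayley_Re_gt0 : 0 < complex.Re w.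
Proof.
move: (disk_Re_Im z_disk) disk_bounds; rewrite /w.
case: z => [x y] /= xy_lt1 [/andP[_ x_lt1] _].
have D_gt0 : 0 < (1 - x) ^+ 2 + y ^+ 2 by rewrite ltr_wpDr ?sqr_ge0 // exprn_gt0 // subr_gt0.
rewrite [X in 0 < X](_ : _ = (1 - x ^+ 2 - y ^+ 2) / ((1 - x) ^+ 2 + y ^+ 2)).
  by rewrite divr_gt0 //; lra.
by rewrite sub0r add0r sqrrN; field; rewrite lt0r_neq0.
Qed.

Lemma cayleyK : z = (w - 1) / (w + 1).
Proof.
rewrite /w; field; rewrite subz_neq0 (_ : 1 + z + (1 - z) = 2) ?pnatr_eq0 //.
by rewrite addrACA subrr addr0.
Qed.

Lemma cayley_q : z / (1 - z ^+ 2) = (w - w^-1) / 4.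
Proof.
rewrite /w; field; rewrite subz_neq0 addz_neq0.
by rewrite (_ : 1 - z ^+ 2 = (1 - z) * (1 + z)) ?mulf_neq0 //; ring.
Qed.

Lemma cayley_L2 : (1 + 'i * z) / (1 - 'i * z) = (1 + 'i * w) / (w + 'i).
Proof.
have wi_neq0 : w + 'i != 0.
  by apply: complex_neq0; rewrite raddfD /= addr0 lt0r_neq0 // cayley_Re_gt0.
have E : (1 + 'i * z) / (1 - 'i * z) - (1 + 'i * w) / (w + 'i) =
    (1 + 'i ^+ 2) * (2 * z / ((1 - 'i * z) * (w + 'i) * (1 - z))).
  have wi_1z : 1 + z + 'i * (1 - z) != 0.
    by rewrite [X in X != 0](_ : _ = (w + 'i) * (1 - z)) ?mulf_neq0 // /w; field.
  by rewrite /w; field; rewrite subz_neq0 wi_1z subiz_neq0.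
by apply/eqP; rewrite -subr_eq0 E sqr_i addrN mul0r.
Qed.

End CayleyTransform.

Section PolarCoordinates.
Context {R : realType}.
Implicit Types (a b t : R) (z : R[i]).

Lemma cos_sin_atan a b : 0 < a ->
  cos (atan (b / a)) = a / Num.sqrt (a ^+ 2 + b ^+ 2) /\
  sin (atan (b / a)) = b / Num.sqrt (a ^+ 2 + b ^+ 2).
Proof.
move=> a_gt0; have ab_gt0 : 0 < a ^+ 2 + b ^+ 2 by rewrite ltr_wpDr ?sqr_ge0 ?exprn_gt0.
set r := Num.sqrt _; have r_gt0 : 0 < r by rewrite sqrtr_gt0.
have r2 : r ^+ 2 = a ^+ 2 + b ^+ 2 by rewrite sqr_sqrtr // ltW.
have cosE : cos (atan (b / a)) = a / r.
  rewrite cos_atan (_ : 1 + (b / a) ^+ 2 = (r / a) ^+ 2).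
    by rewrite sqrtr_sqr ger0_norm ?invf_div // divr_ge0 // ltW.
  by rewrite !expr_div_n r2; field; rewrite lt0r_neq0.
split=> //; have := atanK (b / a); rewrite /tan cosE => sinE.
rewrite -[sin _](divfK (_ : a / r != 0)) ?sinE; last by rewrite lt0r_neq0 ?divr_gt0.
by field; rewrite !lt0r_neq0.
Qed.

Lemma Im_Clog_L2 a b : 0 < a ->
  complex.Im (Clog ((1 + 'i * (a +i* b)) / ((a +i* b) + 'i))) =
    atan ((a ^+ 2 + b ^+ 2 - 1) / (2 * a)).
Proof.
move=> a_gt0; have D_gt0 : 0 < a ^+ 2 + (b + 1) ^+ 2 by rewrite ltr_wpDr ?sqr_ge0 ?exprn_gt0.
rewrite Im_Clog Arg_Re_gt0 /=; last first.
  rewrite [X in 0 < X](_ : _ = 2 * a / (a ^+ 2 + (b + 1) ^+ 2)) ?divr_gt0 ?mulr_gt0 //.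
  by rewrite !(add0r, addr0, mul1r, mul0r, sub0r); field; rewrite lt0r_neq0.
congr atan; rewrite !(add0r, addr0, mul1r, mul0r, sub0r); field.
by rewrite !lt0r_neq0 //; nra.
Qed.

Lemma Im_subV_div4 a b : 0 < a ->
  complex.Im (((a +i* b) - (a +i* b)^-1) / 4) = (b + b / (a ^+ 2 + b ^+ 2)) / 4.
Proof.
move=> a_gt0; have ab_gt0 : 0 < a ^+ 2 + b ^+ 2 by rewrite ltr_wpDr ?sqr_ge0 ?exprn_gt0.
rewrite complex_nat /= !(add0r, addr0, mul1r, mul0r, sub0r, mulr0, oppr0).
by field; rewrite lt0r_neq0.
Qed.

Lemma ft_polar t {z} : `|z| < 1 -> exists r y, [/\ 0 < r, -(pi / 2) < y < pi / 2,
  2 * complex.Re (f_t t z) = ft_re t r y, 2 * complex.Im (f_t t z) = ft_im t r y &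
  z = ((r * cos y) +i* (r * sin y) - 1) / ((r * cos y) +i* (r * sin y) + 1)].
Proof.
move=> z_disk; have [-> ->] := ReIm_ft t z.
rewrite /L1 /L2 cayley_L2 // cayley_q //.
move: (cayley_Re_gt0 z_disk) (cayleyK z_disk); move: (_ / (1 - z)) => [a b] a_gt0 ->.
have {}a_gt0 : 0 < a := a_gt0.
have [cosE sinE] := cos_sin_atan a b a_gt0.
set r := Num.sqrt _ in cosE sinE.
have r_gt0 : 0 < r by rewrite sqrtr_gt0 ltr_wpDr ?sqr_ge0 ?exprn_gt0.
have r2 : r ^+ 2 = a ^+ 2 + b ^+ 2 by rewrite sqr_sqrtr // addr_ge0 ?sqr_ge0.
exists r, (atan (b / a)); split => //.
- by rewrite atan_gtNpi2 atan_ltpi2.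
- rewrite Im_Clog_L2 // Re_Clog /= -/r /ft_re cosE /sinh_ln.
  by congr (_ * atan _ + _); rewrite -r2; field; rewrite !lt0r_neq0.
- rewrite Im_subV_div4 // Im_Clog Arg_Re_gt0 //= /ft_im sinE /cosh_ln -r2.
  by field; rewrite lt0r_neq0.
- by rewrite cosE sinE ![r * _]mulrC !divfK ?lt0r_neq0.
Qed.

End PolarCoordinates.

Theorem mainTheorem5 (R : realType) (t : R) :
  0 <= t <= 1 -> univalent_on_disk (f_t t).
Proof.
move=> t01 z1 z2 z1_disk z2_disk f12.
have [r1 [y1 [r1_gt0 hy1 Re1 Im1 ->]]] := ft_polar t z1_disk.
have [r2 [y2 [r2_gt0 hy2 Re2 Im2 ->]]] := ft_polar t z2_disk.
have := ft_re_im_inj _ t01 r1_gt0 r2_gt0 hy1 hy2.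
by rewrite -Re1 -Re2 -Im1 -Im2 f12 => /(_ erefl erefl) [-> ->].
Qed.
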